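(* For every $\zeta=\sum_{j=1}^k x_je_j\in E_k$ and every $t\in\mathbb{C}$ with $t\neq\xi_u$ for all $u=1,\ldots,m$ (where $\xi_u=f_u(\zeta)$), the element $te_1-\zeta$ is invertible in $\mathbb{A}_n^m$ and $$(te_1-\zeta)^{-1}=\sum_{u=1}^m\frac{1}{t-\xi_u}\,I_u+\sum_{s=m+1}^{n}\sum_{r=2}^{s-m+1}\frac{Q_{r,s}}{(t-\xi_{u_s})^r}\,I_s,$$ where the coefficients $Q_{r,s}$ are given recursively by $$Q_{2,s}=T_s,\qquad Q_{r,s}=\sum_{q=r+m-2}^{s-1}Q_{r-1,q}\,B_{q,s},\quad r=3,4,\ldots,s-m+1,$$ with $$T_s:=\sum_{j=2}^k x_j a_{js},\qquad B_{q,s}:=\sum_{p=m+1}^{s-1}T_p\,\Upsilon^{p}_{q,s},$$ and $u_s$ is the index from multiplication rule 3.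
   Context: Fix integers $1\le m\le n$. $\mathbb{A}_n^m$ is an $n$-dimensional commutative associative algebra with unit over $\mathbb{C}$ having a basis $\{I_r\}_{r=1}^n$ with the multiplication rules: (1) for $r,s\in\{1,\ldots,m\}$: $I_rI_s=0$ if $r\ne s$ and $I_rI_r=I_r$; (2) for $r,s\in\{m+1,\ldots,n\}$: $I_rI_s=\sum_{p=\max\{r,s\}+1}^n\Upsilon^s_{r,p}I_p$ with structure constants $\Upsilon^s_{r,p}\in\mathbb{C}$ (so $\Upsilon^{p}_{q,s}$ is the coefficient of $I_s$ in $I_qI_p$); (3) for each $s\in\{m+1,\ldots,n\}$ there is a unique $u_s\in\{1,\ldots,m\}$ such that for all $r\in\{1,\ldots,m\}$: $I_rI_s=I_s$ if $r=u_s$ and $I_rI_s=0$ if $r\ne u_s$. The unit is $1=\sum_{u=1}^mI_u$. For $u=1,\ldots,m$, $f_u:\mathbb{A}_n^m\to\mathbb{C}$ is the linear functional $f_u(\sum_r\lambda_rI_r)=\lambda_u$ (it is continuous and multiplicative). Let $2\le k\le 2n$ and let $e_1=1=\sum_{r=1}^mI_r$, $e_j=\sum_{r=1}^n a_{jr}I_r$ ($a_{jr}\in\mathbb{C}$, $j=2,\ldots,k$) be linearly independent over $\mathbb{R}$. $E_k=\{\zeta=\sum_{j=1}^kx_je_j: x_j\in\mathbb{R}\}$, and $\xi_u:=f_u(\zeta)=x_1+\sum_{j=2}^kx_ja_{ju}$. *)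

(* The field C stands for the complex numbers: it is an
   arbitrary numClosedFieldType (C itself is not available as an instance). *)
From HB Require Import structures.
From mathcomp Require Import all_boot all_order all_algebra.
Set Implicit Arguments. Unset Strict Implicit. Unset Printing Implicit Defensive.
Import Order.TTheory GRing.Theory Num.Theory.
Local Open Scope ring_scope.

Section AnmDefs.
Variable C : numClosedFieldType.

(* An element sum_r lambda_r I_r of A_n^m is represented by its coefficient
   function r |-> lambda_r; only indices 1 <= r <= n are meaningful. *)
Definition Anm_eq (n : nat) (x y : nat -> C) : Prop :=
  forall r : nat, (1 <= r <= n)%N -> x r = y r.

(* Structure constant: coefficient of I_p in I_i I_j (rules (1)-(3));
   Ups q p s = Upsilon^p_{q,s} = coefficient of I_s in I_q I_p, for q,p > m. *)
Definition Anm_cst (m : nat) (u : nat -> nat) (Ups : nat -> nat -> nat -> C)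
  (i j p : nat) : C :=
  if (i <= m)%N then
    if (j <= m)%N then ((i == j) && (p == i))%:R
    else ((u j == i) && (p == j))%:R
  else if (j <= m)%N then ((u i == j) && (p == i))%:R
  else if (maxn i j < p)%N then Ups i j p else 0.

Definition Anm_mul (n m : nat) (u : nat -> nat) (Ups : nat -> nat -> nat -> C)
  (x y : nat -> C) : nat -> C :=
  fun p => \sum_(1 <= i < n.+1) \sum_(1 <= j < n.+1) x i * y j * Anm_cst m u Ups i j p.

Definition Anm_one (m : nat) : nat -> C := fun r => ((0 < r)%N && (r <= m)%N)%:R.

Definition evec (m : nat) (a : nat -> nat -> C) (j : nat) : nat -> C :=
  if j == 1%N then Anm_one m else a j.

Definition zetaA (k m : nat) (a : nat -> nat -> C) (x : nat -> C) : nat -> C :=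
  fun r => \sum_(1 <= j < k.+1) x j * evec m a j r.

Definition Tco (k : nat) (a : nat -> nat -> C) (x : nat -> C) (s : nat) : C :=
  \sum_(2 <= j < k.+1) x j * a j s.

Definition Bco (k m : nat) (a : nat -> nat -> C) (x : nat -> C)
  (Ups : nat -> nat -> nat -> C) (q s : nat) : C :=
  \sum_(m.+1 <= p < s) Tco k a x p * Ups q p s.

(* Qaux i s = Q_{i+2,s}:  Q_{2,s} = T_s,
   Q_{r,s} = sum_{q=r+m-2}^{s-1} Q_{r-1,q} B_{q,s}  (r >= 3). *)
Fixpoint Qaux (k m : nat) (a : nat -> nat -> C) (x : nat -> C)
  (Ups : nat -> nat -> nat -> C) (i s : nat) : C :=
  match i with
  | 0 => Tco k a x s
  | i'.+1 => \sum_(i'.+2 + m - 1 <= q < s)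
               Qaux k m a x Ups i' q * Bco k m a x Ups q s
  end.

Definition Qco (k m : nat) (a : nat -> nat -> C) (x : nat -> C)
  (Ups : nat -> nat -> nat -> C) (r s : nat) : C :=
  Qaux k m a x Ups (r - 2) s.

End AnmDefs.

(* Write te_1 - zeta = D - N with D = sum_(u <= m) (t - xi_u) I_u and
   N = sum_(s > m) T_s I_s.  Since the I_u are orthogonal idempotents with
   I_(u_s) I_s = I_s, D acts on I_s as multiplication by t - xi_(u_s), so D is
   invertible when t <> xi_u.  Multiplication by N only produces I_p with p
   larger than both factors' indices, so N^(n+1) = 0 and the telescoping
   Neumann series sum_j D^-(j+1) N^j inverts D - N.  The coordinate of
   N^(r-1) on I_s is Q_(r,s) (this is the recursion defining Q), which gives
   the stated formula. *)

From HB Require Import structures.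
From mathcomp Require Import all_boot all_order all_algebra zify.
Set Implicit Arguments. Unset Strict Implicit. Unset Printing Implicit Defensive.
Import Order.TTheory GRing.Theory Num.Theory.
Local Open Scope ring_scope.

Section NatSums.
Variable V : nmodType.
Implicit Types (F : nat -> V) (lo hi : nat).

Lemma big_nat_only lo hi p F :
  (lo <= p < hi)%N -> (forall i, (lo <= i < hi)%N -> i != p -> F i = 0) ->
  \sum_(lo <= i < hi) F i = F p.
Proof.
move=> hp F0; rewrite (bigD1_seq p) /= ?mem_index_iota ?iota_uniq //.
rewrite big1_seq ?addr0 // => i /andP[ip]; rewrite mem_index_iota => hi'.
exact: F0.
Qed.

Lemma big_nat_widen0 lo hi hi' F :
  (hi <= hi')%N -> (forall i, (hi <= i < hi')%N -> F i = 0) ->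
  \sum_(lo <= i < hi) F i = \sum_(lo <= i < hi') F i.
Proof.
move=> le_hi F0; rewrite (big_nat_widen lo _ _ _ _ le_hi) big_mkcond /=.
apply: eq_big_nat => i /andP[_ lt_i]; case: ltnP => // le_i.
by rewrite F0 ?le_i.
Qed.

Lemma big_nat_widenl0 lo' lo hi F :
  (lo' <= lo)%N -> (forall i, (lo' <= i < lo)%N -> F i = 0) ->
  \sum_(lo <= i < hi) F i = \sum_(lo' <= i < hi) F i.
Proof.
move=> le_lo F0; rewrite (big_nat_widenl _ _ _ _ _ le_lo) big_mkcond /=.
apply: eq_big_nat => i /andP[le_i _]; case: leqP => // lt_i.
by rewrite F0 ?le_i.
Qed.

Lemma big_nat_restrict lo lo' hi' hi F :
  (lo <= lo')%N -> (hi' <= hi)%N ->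
  \sum_(lo <= i < hi) (if (lo' <= i < hi')%N then F i else 0) =
  \sum_(lo' <= i < hi') F i.
Proof.
move=> le_lo le_hi; symmetry.
rewrite (eq_big_nat _ _ (F2 := fun i => if (lo' <= i < hi')%N then F i else 0)); last first.
  by move=> i ->.
rewrite (@big_nat_widen0 lo' hi' hi) ?(@big_nat_widenl0 lo lo' hi) //.
- by move=> i /andP[_ lt_i]; rewrite leqNgt lt_i.
- by move=> i /andP[le_i _]; rewrite ltnNge le_i andbF.
Qed.

End NatSums.

Section AnmProduct.
Variables (C : numClosedFieldType) (n m : nat) (u : nat -> nat)
  (Ups : nat -> nat -> nat -> C).

Local Notation mul := (Anm_mul n m u Ups).

Lemma eq_Anm_mul y y' z z' p :
  Anm_eq n y y' -> Anm_eq n z z' -> mul y z p = mul y' z' p.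
Proof.
move=> ey ez; apply: eq_big_nat => i ri; apply: eq_big_nat => j rj.
by rewrite ey ?ez.
Qed.

Lemma Anm_mulBl y z w p : mul (fun r => y r - z r) w p = mul y w p - mul z w p.
Proof.
rewrite /Anm_mul -sumrB; apply: eq_bigr => i _; rewrite -sumrB.
by apply: eq_bigr => j _; rewrite !mulrBl.
Qed.

Lemma Anm_mul_sumr y lo hi (z : nat -> nat -> C) p :
  mul y (fun r => \sum_(lo <= j < hi) z j r) p = \sum_(lo <= j < hi) mul y (z j) p.
Proof.
rewrite /Anm_mul [RHS]exchange_big; apply: eq_bigr => i _.
rewrite [RHS]exchange_big; apply: eq_bigr => j _.
by rewrite mulr_sumr mulr_suml.
Qed.

Definition Anm_diag (c : nat -> C) : nat -> C :=
  fun r => if (0 < r <= m)%N then c r else 0.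

Lemma Anm_one_diag : Anm_one C m =1 Anm_diag (fun _ => 1).
Proof. by move=> r; rewrite /Anm_one /Anm_diag; case: ifP. Qed.

Fixpoint Anm_exp (y : nat -> C) (j : nat) : nat -> C :=
  if j is j'.+1 then mul (Anm_exp y j') y else Anm_one C m.

(* [I_(idem_index p)] is the idempotent with [I_(idem_index p) I_p = I_p]. *)
Definition idem_index (p : nat) : nat := if (p <= m)%N then p else u p.

Hypothesis le_mn : (m <= n)%N.
Hypothesis u_range : forall s, (m < s <= n)%N -> (1 <= u s <= m)%N.

Lemma idem_index_range p : (0 < p <= n)%N -> (0 < idem_index p <= m)%N.
Proof.
case/andP=> p0 pn; rewrite /idem_index; case: (leqP p m) => [pm | mp].
  by rewrite p0.
by apply: u_range; rewrite mp.
Qed.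

Lemma Anm_cst_idem i j p : (i <= m)%N ->
  Anm_cst m u Ups i j p = ((j == p) && (idem_index p == i))%:R.
Proof.
rewrite /Anm_cst /idem_index => ->.
have [<- | jp] := eqVneq j p; case: (leqP j m) => jm /=.
- by rewrite (eq_sym j) andbb.
- by rewrite andbT.
- by case: (i =P j) => [-> | _] //=; rewrite (eq_sym p) (negbTE jp).
- by rewrite andbF.
Qed.

Lemma Anm_mul_diagl c y p : (0 < p <= n)%N ->
  mul (Anm_diag c) y p = c (idem_index p) * y p.
Proof.
move=> rp; have /andP[v0 vm] := idem_index_range rp.
have vr : (1 <= idem_index p < n.+1)%N by rewrite v0 ltnS (leq_trans vm le_mn).
have pr : (1 <= p < n.+1)%N by case/andP: rp => -> pn; rewrite ltnS.
rewrite /Anm_mul (big_nat_only vr) => [|i _ iv]; last first.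
  apply: big1 => j _; rewrite /Anm_diag.
  case: ifP => [/andP[_ im] | _]; last by rewrite !mul0r.
  by rewrite Anm_cst_idem // (eq_sym (idem_index p)) (negbTE iv) andbF mulr0.
rewrite (big_nat_only pr) => [|j _ /negbTE jp]; last first.
  by rewrite Anm_cst_idem // jp mulr0.
by rewrite Anm_cst_idem // !eqxx mulr1 /Anm_diag v0 vm.
Qed.

Section Neumann.
Hypothesis Anm_mulC : forall y z, Anm_eq n (mul y z) (mul z y).
Hypothesis Anm_mulA : forall y z w, Anm_eq n (mul (mul y z) w) (mul y (mul z w)).

Variable d : nat -> C.
Hypothesis d_neq0 : forall v, (0 < v <= m)%N -> d v != 0.
Local Notation dpowV j := (Anm_diag (fun v => (d v)^-1 ^+ j)).

Lemma Anm_diag_mul_powV j :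
  Anm_eq n (mul (Anm_diag d) (dpowV j.+1)) (dpowV j).
Proof.
move=> r rr; have /andP[r0 _] := rr.
rewrite Anm_mul_diagl // /Anm_diag /idem_index r0 /=.
case: leqP => rm; last by rewrite mulr0.
by rewrite exprS mulrA mulfV ?mul1r ?d_neq0 ?r0.
Qed.

Lemma Anm_neumann_step z j :
  Anm_eq n (mul (fun r => Anm_diag d r - z r) (mul (dpowV j.+1) (Anm_exp z j)))
    (fun r => mul (dpowV j) (Anm_exp z j) r - mul (dpowV j.+1) (Anm_exp z j.+1) r).
Proof.
move=> p rp; rewrite Anm_mulBl; congr (_ - _).
  by rewrite -Anm_mulA //; apply: eq_Anm_mul => //; apply: Anm_diag_mul_powV.
by rewrite Anm_mulC // Anm_mulA.
Qed.

Lemma Anm_neumann z l :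
  Anm_eq n (Anm_exp z l) (fun _ => 0) ->
  Anm_eq n (mul (fun r => Anm_diag d r - z r)
                (fun r => \sum_(0 <= j < l) mul (dpowV j.+1) (Anm_exp z j) r))
    (Anm_one C m).
Proof.
move=> zl p rp; rewrite Anm_mul_sumr.
rewrite (@telescope_sumr_eq _ _ _ (fun j => - mul (dpowV j) (Anm_exp z j) p)) //; last first.
  by move=> j _; rewrite Anm_neumann_step // opprK addrC.
rewrite opprK (@eq_Anm_mul (dpowV l) (dpowV l) _ (fun _ => 0) p) // !Anm_mul_diagl //.
by rewrite mulr0 oppr0 add0r expr0 mul1r.
Qed.

End Neumann.

Variables (k : nat) (a : nat -> nat -> C) (x : nat -> C).

Local Notation Bco := (Bco k m a x Ups).
Local Notation Qaux := (Qaux k m a x Ups).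

Definition Anm_rad : nat -> C := fun r => if (m < r)%N then Tco k a x r else 0.

Lemma Anm_mul_rad y s : (forall r, (0 < r <= m)%N -> y r = 0) -> (0 < s <= n)%N ->
  mul y Anm_rad s = \sum_(m.+1 <= q < s) y q * Bco q s.
Proof.
move=> y0 /andP[s0 /leqW sn].
rewrite /Anm_mul -(@big_nat_restrict _ 1 m.+1 s n.+1) ?sn //.
apply: eq_big_nat => q /andP[q0 _].
case: (leqP q m) => qm /=.
  by rewrite y0 ?q0 //; apply: big1 => b _; rewrite !mul0r.
have cst_qb b : Anm_cst m u Ups q b s =
    if (b <= m)%N then ((u q == b) && (s == q))%:R
    else if (maxn q b < s)%N then Ups q b s else 0.
  by rewrite /Anm_cst leqNgt qm.
case: (ltnP q s) => qs /=.
  rewrite /Bco mulr_sumr -(@big_nat_restrict _ 1 m.+1 s n.+1) ?sn //.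
  apply: eq_big_nat => b _; rewrite cst_qb /Anm_rad.
  case: (leqP b m) => bm /=; first by rewrite mulr0 mul0r.
  by rewrite gtn_max qs /=; case: ltnP => bs; rewrite ?mulr0 ?mulrA.
apply: big1 => b _; rewrite cst_qb /Anm_rad.
case: (leqP b m) => bm /=; first by rewrite mulr0 mul0r.
by rewrite gtn_max ltnNge qs /= mulr0.
Qed.

Lemma Qaux_eq0 i s : (0 < i)%N -> (s <= i + m)%N -> Qaux i s = 0.
Proof. by case: i => [//|i] _ hs; rewrite /= big_geq. Qed.

Lemma Anm_exp_rad i s : (0 < s <= n)%N ->
  Anm_exp Anm_rad i.+1 s = if (s <= m)%N then 0 else Qaux i s.
Proof.
elim: i s => [|i IH] s rs.
  rewrite /= (@eq_Anm_mul _ (Anm_diag (fun _ => 1)) _ Anm_rad) //; last first.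
    by move=> r _; apply: Anm_one_diag.
  by rewrite Anm_mul_diagl // mul1r /Anm_rad ltnNge; case: leqP.
have y0 r : (0 < r <= m)%N -> Anm_exp Anm_rad i.+1 r = 0.
  by case/andP=> r0 rm; rewrite IH ?rm ?r0 ?(leq_trans rm le_mn).
rewrite -[LHS]/(mul (Anm_exp Anm_rad i.+1) Anm_rad s) Anm_mul_rad //.
case/andP: rs => s0 sn; case: (leqP s m) => sm; first by rewrite big_geq ?leqW.
rewrite -[Qaux i.+1 s]/(\sum_(i.+2 + m - 1 <= q < s) Qaux i q * Bco q s).
rewrite [RHS](@big_nat_widenl0 _ m.+1); first last.
- by move=> q /andP[q1 q2]; rewrite Qaux_eq0 ?mul0r //; lia.
- lia.
apply: eq_big_nat => q /andP[q1 qs].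
by rewrite IH ?(leqNgt q m) ?q1 //; lia.
Qed.

Lemma Anm_rad_nilpotent : Anm_eq n (Anm_exp Anm_rad n.+1) (fun _ => 0).
Proof.
move=> s rs; rewrite Anm_exp_rad //; case: ifP => // _.
by rewrite Qaux_eq0 //; lia.
Qed.

Lemma zetaA_rad r : (m < r)%N -> zetaA k m a x r = Tco k a x r.
Proof.
move=> mr; rewrite /zetaA -(@big_nat_widenl0 _ 1 2) => [|//|i /andP[i1 i2]].
  by apply: eq_big_nat => j /andP[j2 _]; rewrite /evec gtn_eqF.
have -> : i = 1%N by apply/eqP; rewrite eqn_leq -ltnS i2.
by rewrite /evec eqxx /Anm_one (leqNgt r m) mr andbF mulr0.
Qed.

Lemma Anm_neumann_rad_coef (d : nat -> C) r : (0 < r <= n)%N ->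
  (if (r <= m)%N then (d r)^-1
   else \sum_(2 <= rr < r - m + 2) Qco k m a x Ups rr r / d (u r) ^+ rr) =
  \sum_(0 <= j < n.+1) mul (Anm_diag (fun v => (d v)^-1 ^+ j.+1)) (Anm_exp Anm_rad j) r.
Proof.
move=> rr; under [RHS]eq_bigr => j _ do rewrite Anm_mul_diagl //.
rewrite big_nat_recl // -[Anm_exp _ 0]/(Anm_one C m).
under [in RHS]eq_bigr => j _ do rewrite Anm_exp_rad //.
case/andP: rr => r0 rn; rewrite /idem_index /Anm_one r0; case: leqP => rm /=.
  by rewrite big1 => [|j _]; rewrite ?mulr0 ?addr0 ?mulr1 ?expr1.
rewrite mulr0 add0r -{1}[2%N]/(0 + 2)%N big_addn addnK.
rewrite (@big_nat_widen0 _ _ _ n) => [||j /andP[rj _]]; first last.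
- by rewrite /Qco addnK Qaux_eq0 ?mul0r //; lia.
- lia.
by apply: eq_big_nat => j _; rewrite /Qco addnK exprVn mulrC addn2.
Qed.

End AnmProduct.

Theorem lemma1 (C : numClosedFieldType) (n m k : nat)
  (u : nat -> nat) (Ups : nat -> nat -> nat -> C) (a : nat -> nat -> C)
  (x : nat -> C) (t : C) :
  (1 <= m)%N -> (m <= n)%N ->
  (* rule (3): u_s in {1,...,m} *)
  (forall s, (m < s <= n)%N -> (1 <= u s <= m)%N) ->
  (* A_n^m is a commutative associative algebra *)
  (forall y z : nat -> C, Anm_eq n (Anm_mul n m u Ups y z) (Anm_mul n m u Ups z y)) ->
  (forall y z w : nat -> C,
     Anm_eq n (Anm_mul n m u Ups (Anm_mul n m u Ups y z) w)
           (Anm_mul n m u Ups y (Anm_mul n m u Ups z w))) ->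
  (2 <= k)%N -> (k <= 2 * n)%N ->
  (* e_1, ..., e_k linearly independent over R *)
  (forall c : nat -> C, (forall j, c j \is Num.real) ->
     Anm_eq n (fun r => \sum_(1 <= j < k.+1) c j * evec m a j r) (fun _ => 0) ->
     forall j, (1 <= j <= k)%N -> c j = 0) ->
  (* zeta = sum x_j e_j in E_k *)
  (forall j, x j \is Num.real) ->
  (* t <> xi_u = f_u(zeta) *)
  (forall v, (1 <= v <= m)%N -> t != zetaA k m a x v) ->
  let w := fun r => t * evec m a 1 r - zetaA k m a x r in
  let xi := zetaA k m a x in
  let W := fun r =>
    if (r <= m)%N then (t - xi r)^-1
    else \sum_(2 <= rr < r - m + 2) Qco k m a x Ups rr r / (t - xi (u r)) ^+ rr in
  Anm_eq n (Anm_mul n m u Ups w W) (Anm_one C m) /\ Anm_eq n (Anm_mul n m u Ups W w) (Anm_one C m).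
Proof.
move=> _ le_mn u_range mulC mulA _ _ _ _ t_neq w xi W.
pose d v := t - xi v.
have d_neq0 v : (0 < v <= m)%N -> d v != 0 by move=> /t_neq; rewrite subr_eq0.
have w_split : Anm_eq n w (fun r => Anm_diag m d r - Anm_rad m k a x r).
  move=> r /andP[r0 _]; rewrite /w /evec eqxx /Anm_one /Anm_diag /Anm_rad r0 /=.
  case: leqP => rm; first by rewrite mulr1 subr0.
  by rewrite zetaA_rad // mulr0 !sub0r.
have W_series := Anm_neumann_rad_coef Ups le_mn u_range k a x d.
have wW : Anm_eq n (Anm_mul n m u Ups w W) (Anm_one C m).
  move=> p rp; rewrite (eq_Anm_mul _ _ _ _ w_split W_series).
  exact: (Anm_neumann le_mn u_range mulC mulA d_neq0
    (Anm_rad_nilpotent Ups le_mn u_range k a x) rp).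
by split=> // p rp; rewrite mulC // wW.
Qed.
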